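(* Setting: $\Phi(w)=f(w)+g(w)+h(w)$ on $\mathbb{R}^d$ with $f=\frac1n\sum_{j=1}^n f_j$, each $f_j$ $L$-smooth; $g:\mathbb{R}^d\to\mathbb{R}$ such that for every $\lambda>0$ and $w$ the minimum of $x\mapsto\frac{1}{2\lambda}\|w-x\|_2^2+g(x)$ is attained at a chosen point $\zeta^\lambda(w)$; $h$ proper, closed, convex. Let $e_\lambda g(w)=\frac{1}{2\lambda}\|w-\zeta^\lambda(w)\|_2^2+g(\zeta^\lambda(w))$, $\tilde\Phi_\lambda=f+e_\lambda g+h$, and assume $\tilde\Phi_\lambda$ has a global minimizer $w^*_\lambda$. Algorithm VRSPA with positive integers $S$ (number of epochs), $m$ (epoch length), batch size $b=m^2$, $\theta\in\mathbb{R}$, $\lambda=(Sm)^{-\theta}$, $L_\lambda=L+(Sm)^\theta$, $\gamma=\frac{1}{6L_\lambda}$, initial point $\tilde w^1$: for $k=1,\dots,S$: set $w^k_1=\tilde w^k$, $G^k=\nabla f(\tilde w^k)$; for $t=1,\dots,m$: draw a multiset $I$ of $b$ indices i.i.d. uniformly from $\{1,\dots,n\}$ (independent of the past), set $V^k_t=\frac1b\sum_{j\in I}\left(\nabla f_j(w^k_t)-\nabla f_j(\tilde w^k)\right)+G^k+\frac1\lambda\left(w^k_t-\zeta^\lambda(w^k_t)\right)$ and $w^k_{t+1}=\operatorname{prox}_{\gamma h}(w^k_t-\gamma V^k_t)$; then set $\tilde w^{k+1}=w^k_{m+1}$. Finally draw $(R,T)$ uniformly from $\{1,\dots,S\}\times\{1,\dots,m\}$.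 Claim: with $\mathcal{G}^{R,T}_{\gamma,E}(w^R_T):=\frac1\gamma\left(w^R_T-\operatorname{prox}_{\gamma h}\left(w^R_T-\gamma\left(\nabla f(w^R_T)+\frac1\lambda(w^R_T-\zeta^\lambda(w^R_T))\right)\right)\right)$, $$\mathbb{E}\|\mathcal{G}^{R,T}_{\gamma,E}(w^R_T)\|_2^2\le\tilde{\mathcal{D}}\,\frac{L+(Sm)^\theta}{Sm},$$ where $\tilde{\mathcal{D}}=36\left(\tilde\Phi_\lambda(\tilde w^1)-\tilde\Phi_\lambda(w^*_\lambda)\right)$.
   Context: $\operatorname{prox}_{\gamma h}(v)=\arg\min_x\left(\frac{1}{2\gamma}\|v-x\|_2^2+h(x)\right)$. A function is $L$-smooth if it is differentiable with $L$-Lipschitz gradient. *)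

From HB Require Import structures.
From mathcomp Require Import all_boot all_order all_algebra.
From mathcomp Require Import all_classical all_reals all_analysis.
Import Order.TTheory GRing.Theory Num.Theory.
Import numFieldNormedType.Exports.

Set Implicit Arguments.
Unset Strict Implicit.
Unset Printing Implicit Defensive.

Local Open Scope ring_scope.

Section VRSPA.
Context {R : realType} {d : nat}.
Local Notation vec := 'rV[R]_d.

Definition dotv (u v : vec) : R := \sum_(i < d) u 0 i * v 0 i.
Definition sqnorm (u : vec) : R := dotv u u.
Definition enorm (u : vec) : R := Num.sqrt (sqnorm u).

Definition is_gradient (f : vec -> R) (G : vec -> vec) : Prop :=
  forall x, differentiable f x /\ forall v, 'd f x v = dotv (G x) v.

Definition lipschitz_e (F : vec -> vec) (L : R) : Prop :=
  forall x y, enorm (F x - F y) <= L * enorm (x - y).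

Definition L_smooth (f : vec -> R) (G : vec -> vec) (L : R) : Prop :=
  is_gradient f G /\ lipschitz_e G L.

Definition proper_fun (h : vec -> \bar R) : Prop :=
  (forall x, h x <> -oo%E) /\ exists x, h x <> +oo%E.
Definition closed_fun (h : vec -> \bar R) : Prop :=
  closed [set p : vec * R | (h p.1 <= p.2%:E)%E].
Definition convex_fun (h : vec -> \bar R) : Prop :=
  forall (x y : vec) (t : R), 0 < t < 1 ->
    (h ((1 - t) *: x + t *: y)%R <= (1 - t)%:E * h x + t%:E * h y)%E.

Definition is_prox (gam : R) (h : vec -> \bar R) (P : vec -> vec) : Prop :=
  forall v x, (((2 * gam)^-1 * sqnorm (v - P v))%:E + h (P v)
               <= ((2 * gam)^-1 * sqnorm (v - x))%:E + h x)%E.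

Definition is_moreau_selection (g : vec -> R) (zeta : R -> vec -> vec) : Prop :=
  forall lam, 0 < lam -> forall w x,
    (2 * lam)^-1 * sqnorm (w - zeta lam w) + g (zeta lam w)
    <= (2 * lam)^-1 * sqnorm (w - x) + g x.

Definition env (g : vec -> R) (zeta : R -> vec -> vec) (lam : R) (w : vec) : R :=
  (2 * lam)^-1 * sqnorm (w - zeta lam w) + g (zeta lam w).

Variable n : nat.
Implicit Types (fj : 'I_n -> vec -> R) (gfj : 'I_n -> vec -> vec).

Definition favg fj (w : vec) : R := n%:R^-1 * \sum_(j < n) fj j w.
Definition gavg gfj (w : vec) : vec := n%:R^-1 *: \sum_(j < n) gfj j w.

Definition PhiT fj (g : vec -> R) zeta (h : vec -> \bar R) (lam : R) (w : vec)
  : \bar R := ((favg fj w + env g zeta lam w)%:E + h w)%E.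

Definition vr_step gfj zeta (lam gam : R) (P : vec -> vec) (b : nat)
  (I : seq 'I_n) (anchor w : vec) : vec :=
  P (w - gam *: (b%:R^-1 *: \sum_(j <- I) (gfj j w - gfj j anchor)
                 + gavg gfj anchor + lam^-1 *: (w - zeta lam w))).

(* inner_iter ... anchor t = w^k_{t+1} (with w^k_1 = anchor), using the
   index multisets dr 0, dr 1, ... *)
Fixpoint inner_iter gfj zeta lam gam P b (dr : nat -> seq 'I_n)
  (anchor : vec) (t : nat) : vec :=
  if t is t'.+1 then
    vr_step gfj zeta lam gam P b (dr t') anchor
            (inner_iter gfj zeta lam gam P b dr anchor t')
  else anchor.

(* anchor_iter ... k = tilde w^{k+1} *)
Fixpoint anchor_iter gfj zeta lam gam P b (m : nat)
  (dr : nat -> nat -> seq 'I_n) (w1 : vec) (k : nat) : vec :=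
  if k is k'.+1 then
    inner_iter gfj zeta lam gam P b (dr k')
               (anchor_iter gfj zeta lam gam P b m dr w1 k') m
  else w1.

(* the sample space: for each epoch k < S and inner step t < m, a b-tuple
   of indices in {0,...,n-1}; the uniform distribution on it is exactly
   i.i.d. uniform draws, independent across steps *)
Definition sample_space (S m b : nat) : finType :=
  {ffun 'I_S * 'I_m -> b.-tuple 'I_n}.

Definition draws (S m b : nat) (om : sample_space S m b) (k t : nat) : seq 'I_n :=
  match (insub k : option 'I_S), (insub t : option 'I_m) with
  | Some k', Some t' => tval (om (k', t'))
  | _, _ => [::]
  end.

(* w^{k+1}_{t+1}(om) for 0-based k < S, t < m *)
Definition vrspa_iter gfj zeta lam gam P (S m b : nat) (w1 : vec)
  (om : sample_space S m b) (k t : nat) : vec :=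
  inner_iter gfj zeta lam gam P b (draws om k)
             (anchor_iter gfj zeta lam gam P b m (draws om) w1 k) t.

Definition grad_map gfj zeta (lam gam : R) (P : vec -> vec) (w : vec) : vec :=
  gam^-1 *: (w - P (w - gam *: (gavg gfj w + lam^-1 *: (w - zeta lam w)))).

(* E || G(w^R_T) ||^2, with om uniform on the sample space and (R,T)
   uniform on {1..S} x {1..m}, independent of om *)
Definition vrspa_expected_sqgrad gfj zeta lam gam P (S m b : nat) (w1 : vec) : R :=
  #|{: sample_space S m b}|%:R^-1 *
  \sum_(om : sample_space S m b)
     ((S * m)%:R^-1 *
      \sum_(k < S) \sum_(t < m)
         sqnorm (grad_map gfj zeta lam gam P
                   (vrspa_iter gfj zeta lam gam P w1 om k t))).

End VRSPA.

(* With D = L + 1/lam and gam = 1/(6 D), the smooth part F = f + e_lam g obeys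
   F y <= F x + <grad x, y - x> + D |y - x|^2 for the direction
   grad x = grad f x + (x - zeta x) / lam, because zeta x solves the Moreau
   problem.  Combined with the optimality of the prox, one step along an
   estimate v of grad x lowers Phi~ by at least |G(x)|^2 / (36 D), up to an
   error 11 / (36 D) |v - grad x|^2.  For batch size m^2 the estimator has
   variance at most L^2 |x - anchor|^2 / m^2, since the indices are drawn
   independently of the current iterate; this drift away from the anchor is
   absorbed by the Lyapunov function Phi~(w_t) + c_t |w_t - anchor|^2 with
   c_t linear in m - t.  Summing the expected decrease over all S m steps
   gives sum E |G|^2 <= 36 D (Phi~(w1) - Phi~(wstar)). *)

From HB Require Import structures.
From mathcomp Require Import all_boot all_order all_algebra.
From mathcomp Require Import all_classical all_reals all_analysis.
From mathcomp Require Import ring lra.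
Import Order.TTheory GRing.Theory Num.Theory.
Import numFieldNormedType.Exports.
Local Open Scope ring_scope.

Set Implicit Arguments.
Unset Strict Implicit.
Unset Printing Implicit Defensive.

Section Euclidean.
Context {R : realType} {d : nat}.
Local Notation vec := 'rV[R]_d.
Implicit Types u v w : vec.

Lemma dotvC u v : dotv u v = dotv v u.
Proof. by apply: eq_bigr => i _; rewrite mulrC. Qed.

Lemma dotvDl u v w : dotv (u + v) w = dotv u w + dotv v w.
Proof. by rewrite /dotv -big_split; apply: eq_bigr => i _; rewrite mxE mulrDl. Qed.

Lemma dotvZl (c : R) u v : dotv (c *: u) v = c * dotv u v.
Proof. by rewrite /dotv mulr_sumr; apply: eq_bigr => i _; rewrite mxE mulrA. Qed.

Lemma dotvNl u v : dotv (- u) v = - dotv u v.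
Proof. by rewrite -scaleN1r dotvZl mulN1r. Qed.

Lemma dotvBl u v w : dotv (u - v) w = dotv u w - dotv v w.
Proof. by rewrite dotvDl dotvNl. Qed.

Lemma dotvDr u v w : dotv u (v + w) = dotv u v + dotv u w.
Proof. by rewrite dotvC dotvDl !(dotvC u). Qed.

Lemma dotvZr (c : R) u v : dotv u (c *: v) = c * dotv u v.
Proof. by rewrite dotvC dotvZl dotvC. Qed.

Lemma dotvNr u v : dotv u (- v) = - dotv u v.
Proof. by rewrite dotvC dotvNl dotvC. Qed.

Lemma dotvBr u v w : dotv u (v - w) = dotv u v - dotv u w.
Proof. by rewrite dotvDr dotvNr. Qed.

Lemma dotv0l v : dotv 0 v = 0.
Proof. by rewrite /dotv big1 // => i _; rewrite mxE mul0r. Qed.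

Lemma dotv0r v : dotv v 0 = 0.
Proof. by rewrite dotvC dotv0l. Qed.

Lemma dotv_suml (I : Type) (r : seq I) (F : I -> vec) v :
  dotv (\sum_(i <- r) F i) v = \sum_(i <- r) dotv (F i) v.
Proof.
elim: r => [|a r IH]; first by rewrite !big_nil dotv0l.
by rewrite !big_cons dotvDl IH.
Qed.

Lemma dotv_sumr (I : Type) (r : seq I) (F : I -> vec) v :
  dotv v (\sum_(i <- r) F i) = \sum_(i <- r) dotv v (F i).
Proof. by rewrite dotvC dotv_suml; apply: eq_bigr => i _; rewrite dotvC. Qed.

Lemma sqnorm_ge0 v : 0 <= sqnorm v.
Proof. by apply: sumr_ge0 => i _; rewrite -expr2 sqr_ge0. Qed.

Lemma sqnorm0 : sqnorm (0 : vec) = 0.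
Proof. exact: dotv0l. Qed.

Lemma sqnorm_eq0 v : sqnorm v = 0 -> v = 0.
Proof.
move=> v0; apply/rowP => i; rewrite mxE.
have sq_ge0 (j : 'I_d) : true -> 0 <= v 0 j * v 0 j by rewrite -expr2 sqr_ge0.
by have /eqP := @psumr_eq0P _ _ _ _ sq_ge0 v0 i isT; rewrite mulf_eq0 orbb => /eqP.
Qed.

Lemma sqnormD u v : sqnorm (u + v) = sqnorm u + 2 * dotv u v + sqnorm v.
Proof. rewrite /sqnorm dotvDl !dotvDr (dotvC v u); lra. Qed.

Lemma sqnormB u v : sqnorm (u - v) = sqnorm u - 2 * dotv u v + sqnorm v.
Proof. rewrite /sqnorm dotvDl !dotvDr !dotvNl !dotvNr (dotvC v u); lra. Qed.

Lemma sqnormZ (c : R) v : sqnorm (c *: v) = c ^+ 2 * sqnorm v.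
Proof. by rewrite /sqnorm dotvZl dotvZr mulrA expr2. Qed.

Lemma sqnormN v : sqnorm (- v) = sqnorm v.
Proof. by rewrite /sqnorm dotvNl dotvNr opprK. Qed.

Lemma dotv_young (s : R) u v :
  0 < s -> 2 * dotv u v <= s * sqnorm u + s^-1 * sqnorm v.
Proof.
move=> s0; rewrite -(ler_pM2l s0) mulrDr [s * (s^-1 * _)]mulrA mulfV ?gt_eqF // mul1r.
have := sqnorm_ge0 (s *: u - v); rewrite sqnormB sqnormZ dotvZl; lra.
Qed.

Lemma dotv_young1 u v : 2 * dotv u v <= sqnorm u + sqnorm v.
Proof. by have := @dotv_young 1 u v ltr01; rewrite invr1 !mul1r. Qed.

Lemma enorm_ge0 v : 0 <= enorm v.
Proof. exact: sqrtr_ge0. Qed.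

Lemma sqr_enorm v : enorm v ^+ 2 = sqnorm v.
Proof. by rewrite sqr_sqrtr // sqnorm_ge0. Qed.

Lemma enormZ (c : R) v : enorm (c *: v) = `|c| * enorm v.
Proof. by rewrite /enorm sqnormZ sqrtrM ?sqr_ge0 // sqrtr_sqr. Qed.

Lemma cauchy_schwarz u v : dotv u v <= enorm u * enorm v.
Proof.
have [u0|nu] := eqVneq (enorm u) 0.
  have /sqnorm_eq0 -> : sqnorm u = 0 by rewrite -sqr_enorm u0 expr0n.
  by rewrite dotv0l mulr_ge0 // enorm_ge0.
have [v0|nv] := eqVneq (enorm v) 0.
  have /sqnorm_eq0 -> : sqnorm v = 0 by rewrite -sqr_enorm v0 expr0n.
  by rewrite dotv0r mulr_ge0 // enorm_ge0.
have pu : 0 < enorm u by rewrite lt_def nu enorm_ge0.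
have pv : 0 < enorm v by rewrite lt_def nv enorm_ge0.
(* Young's inequality with the optimal weight |v| / |u| *)
have := @dotv_young (enorm v / enorm u) u v (divr_gt0 pv pu).
rewrite -!sqr_enorm invf_div !expr2 !mulrA !divfK ?gt_eqF // [enorm v * _]mulrC.
lra.
Qed.

Lemma gradient_mvt (f : vec -> R) (G : vec -> vec) x y :
  is_gradient f G ->
  exists2 c : R, 0 < c < 1 & f y = f x + dotv (G (x + c *: (y - x))) (y - x).
Proof.
move=> fG; set v := y - x.
pose seg := (cst x + ( *:%R^~ v)) : R -> vec.
have seg_lin t : is_diff t seg (0 + ( *:%R^~ v)) by exact: is_diffD.
have seg_diff t : is_diff t (f \o seg) ('d f (seg t) \o (0 + ( *:%R^~ v))).
  by apply: is_diff_comp; have [fd _] := fG (seg t); exact: differentiableP.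
have seg_derive t : is_derive t (1 : R) (f \o seg) (dotv (G (seg t)) v).
  have sd : differentiable (f \o seg) t by case: (seg_diff t).
  have := derivableP (@diff_derivable _ _ _ (f \o seg) t 1 sd).
  rewrite deriveE // (@diff_val _ _ _ _ _ _ _ (seg_diff t)) /=.
  by have [_ ->] := fG (seg t); rewrite add0r scale1r.
have seg_cont : {within `[0, 1], continuous (f \o seg)}%classic.
  apply: continuous_subspaceT => t.
  by apply: differentiable_continuous; case: (seg_diff t).
have [c /[!in_itv] /= c01 mvt] := MVT ltr01 (fun t _ => seg_derive t) seg_cont.
have segE t : seg t = x + t *: v by [].
exists c => //; move: mvt; rewrite /= subr0 mulr1 !segE scale1r scale0r addr0.
have -> : x + v = y by rewrite addrC subrK.
by move=> <-; rewrite addrC subrK.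
Qed.

Lemma L_smooth_descent (f : vec -> R) (G : vec -> vec) (L : R) x y :
  L_smooth f G L -> f y <= f x + dotv (G x) (y - x) + L * sqnorm (y - x).
Proof.
move=> [fG GL]; have [c /andP [c0 c1] ->] := gradient_mvt x y fG.
rewrite -addrA lerD2l -[X in X <= _](subrK (dotv (G x) (y - x))) -dotvBl.
rewrite [X in X <= _]addrC lerD2l (le_trans (cauchy_schwarz _ _)) //.
have := GL (x + c *: (y - x)) x.
have -> : x + c *: (y - x) - x = c *: (y - x) by rewrite addrC addKr.
rewrite enormZ (ger0_norm (ltW c0)).
rewrite -sqr_enorm; have := enorm_ge0 (y - x).
have := enorm_ge0 (G (x + c *: (y - x)) - G x).
set e := enorm (y - x); set g := enorm (G _ - G x) => g0 e0 gle.
have Le0 : 0 <= L * e.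
  by have := le_trans g0 gle; rewrite mulrCA pmulr_rge0.
have : g * e <= L * (c * e) * e by rewrite ler_wpM2r.
have : 0 <= L * e * e * (1 - c).
  by apply: mulr_ge0; [exact: mulr_ge0 | rewrite subr_ge0 ltW].
rewrite expr2; lra.
Qed.

Lemma lipschitz_e_lt0_eq0 (G : vec -> vec) (L : R) :
  lipschitz_e G L -> L < 0 -> forall v : vec, v = 0.
Proof.
move=> G_lip L_lt0 v; have := le_trans (enorm_ge0 _) (G_lip v 0).
rewrite subr0 nmulr_rge0 // => v_le0.
apply: sqnorm_eq0; rewrite -sqr_enorm.
suff -> : enorm v = 0 by rewrite expr0n.
by apply/eqP; rewrite eq_le v_le0 enorm_ge0.
Qed.

End Euclidean.

Lemma ge0_if_ge0_near0 {R : realFieldType} (x c : R) :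
  (forall t, 0 < t < 1 -> 0 <= x + t * c) -> 0 <= x.
Proof.
move=> near0; rewrite leNgt; apply/negP => x_lt0.
have den0 : 0 < 2 * (`|c| - x + 1) by rewrite mulr_gt0 //; have := normr_ge0 c; lra.
set t := - x / (2 * (`|c| - x + 1)).
have t0 : 0 < t by rewrite divr_gt0 // oppr_gt0.
have t1 : t < 1 by rewrite ltr_pdivrMr // mul1r; have := normr_ge0 c; lra.
have tE : t * (2 * (`|c| - x + 1)) = - x by rewrite divfK // gt_eqF.
have tc : t * c <= t * `|c| by rewrite ler_pM2l // ler_norm.
have := near0 t; rewrite t0 t1 => /(_ isT).
have : t * `|c| <= t * (`|c| - x + 1) by rewrite ler_pM2l //; lra.
lra.
Qed.

Section Prox.
Context {R : realType} {d : nat}.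
Local Notation vec := 'rV[R]_d.
Variables (gam : R) (h : vec -> \bar R) (P : vec -> vec).
Hypotheses (gam_gt0 : 0 < gam) (h_proper : proper_fun h) (h_convex : convex_fun h)
  (hP : is_prox gam h P).

Lemma prox_fin_num v : h (P v) \is a fin_num.
Proof.
have [hN [z hz]] := h_proper; have := hP v z.
case: (h z) hz (hN z) => [r| |] //= _ _.
by case: (h (P v)) (hN (P v)).
Qed.

(* First-order optimality of [P v], obtained by comparing it with the points
   of the segment from [P v] to [z], on which [h] is convex. *)
Lemma prox_subgradient v z : h z \is a fin_num ->
  fine (h (P v)) + gam^-1 * dotv (v - P v) (z - P v) <= fine (h z).
Proof.
move=> hz; have hp := prox_fin_num v.
set p := P v; set w := z - p.
rewrite -subr_ge0; set X := fine (h z) - _.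
apply: (@ge0_if_ge0_near0 _ X ((2 * gam)^-1 * sqnorm w)) => t /andP [t0 t1].
set y := (1 - t) *: p + t *: z.
have convex_y := h_convex p z (introT andP (conj t0 t1)).
rewrite -(fineK hp) -(fineK hz) -!EFinM -EFinD in convex_y.
have hyf : h y \is a fin_num.
  rewrite fin_numE; apply/andP; split; first exact/eqP/h_proper.1.
  by apply/eqP => hyE; rewrite hyE in convex_y.
have := hP v y; rewrite -/p -(fineK hp) -(fineK hyf) -!EFinD lee_fin.
rewrite -(fineK hyf) lee_fin in convex_y.
have -> : v - y = (v - p) - t *: w.
  by rewrite /y /w scalerBr scalerBl scale1r; apply/rowP => i; rewrite !mxE; lra.
rewrite (sqnormB (v - p)) sqnormZ dotvZr => prox_y.
rewrite -(pmulr_rge0 _ t0) /X.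
have -> : t * (fine (h z) - (fine (h p) + gam^-1 * dotv (v - p) w)
              + t * ((2 * gam)^-1 * sqnorm w))
    = (2 * gam)^-1 * (t ^+ 2 * sqnorm w - 2 * (t * dotv (v - p) w))
      + (t * fine (h z) - t * fine (h p)).
  by rewrite invfM; field; rewrite gt_eqF.
lra.
Qed.

Lemma prox_nonexpansive a b : sqnorm (P a - P b) <= sqnorm (a - b).
Proof.
have Ha := prox_subgradient a (prox_fin_num b).
have Hb := prox_subgradient b (prox_fin_num a).
have : gam^-1 * (dotv (a - P a) (P b - P a) + dotv (b - P b) (P a - P b)) <= 0.
  by lra.
rewrite pmulr_rle0 ?invr_gt0 //.
have := dotv_young1 (a - b) (P a - P b).
rewrite /sqnorm !dotvBl !dotvBr.
rewrite ?(dotvC (P b) (P a)) ?(dotvC b a) ?(dotvC (P a) a) ?(dotvC (P b) a).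
rewrite ?(dotvC (P a) b) ?(dotvC (P b) b).
lra.
Qed.

Lemma prox_step_descent x v : h x \is a fin_num ->
  fine (h (P (x - gam *: v))) + gam^-1 * sqnorm (P (x - gam *: v) - x)
    + dotv v (P (x - gam *: v) - x) <= fine (h x).
Proof.
move=> hx; have := prox_subgradient (x - gam *: v) hx.
set p := P _; rewrite addrAC dotvBl -[x - p]opprB !dotvNl !dotvNr opprK dotvZl.
rewrite opprK mulrDr mulrA mulVf ?gt_eqF // mul1r /sqnorm; lra.
Qed.

End Prox.

Section OneStep.
Context {R : realType} {d : nat}.
Local Notation vec := 'rV[R]_d.
Variables (n : nat) (fj : 'I_n -> vec -> R) (gfj : 'I_n -> vec -> vec) (L : R).
Variables (g : vec -> R) (zeta : R -> vec -> vec) (h : vec -> \bar R).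
Hypotheses (n_gt0 : (0 < n)%N) (fj_smooth : forall j, L_smooth (fj j) (gfj j) L)
  (zeta_moreau : is_moreau_selection g zeta).

(* The real-valued [PhiT]; off the domain of [h] the junk value [fine (h x) = 0]
   is used, so it is only meaningful where [h x \is a fin_num]. *)
Definition Phir lam x : R := favg fj x + env g zeta lam x + fine (h x).

(* [(x - zeta lam x) / lam] need not be a gradient of [e_lam g]; the analysis
   only uses the quadratic upper bound [env_descent]. *)
Definition smooth_grad lam x : vec := gavg gfj x + lam^-1 *: (x - zeta lam x).

Lemma mean_cst (c : R) : n%:R^-1 * \sum_(j < n) c = c.
Proof.
rewrite sumr_const card_ord -[c *+ n]mulr_natr mulrCA mulVf ?mulr1 //.
by rewrite pnatr_eq0 -lt0n.
Qed.

Lemma favg_descent x y :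
  favg fj y <= favg fj x + dotv (gavg gfj x) (y - x) + L * sqnorm (y - x).
Proof.
rewrite -[L * _]mean_cst /favg /gavg dotvZl dotv_suml -!mulrDr ler_wpM2l ?invr_ge0 ?ler0n //.
by rewrite -!big_split; apply: ler_sum => j _; exact: L_smooth_descent.
Qed.

Lemma env_descent lam x y : 0 < lam ->
  env g zeta lam y <= env g zeta lam x + lam^-1 * dotv (x - zeta lam x) (y - x)
                      + (2 * lam)^-1 * sqnorm (y - x).
Proof.
move=> lam0; rewrite /env (le_trans (zeta_moreau lam0 y (zeta lam x))) //.
have -> : y - zeta lam x = (y - x) + (x - zeta lam x) by rewrite addrA subrK.
rewrite sqnormD dotvC invfM; lra.
Qed.

Lemma smooth_descent lam D x y : 0 < lam -> L + (2 * lam)^-1 <= D ->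
  favg fj y + env g zeta lam y
  <= favg fj x + env g zeta lam x + dotv (smooth_grad lam x) (y - x) + D * sqnorm (y - x).
Proof.
move=> lam0 LD; rewrite /smooth_grad dotvDl [dotv (lam^-1 *: _) _]dotvZl.
have := favg_descent x y; have := env_descent x y lam0.
have := ler_wpM2r (sqnorm_ge0 (y - x)) LD; lra.
Qed.

Lemma Phir_prox_step lam gam D P x v : 0 < lam -> L + (2 * lam)^-1 <= D ->
  0 < gam -> convex_fun h -> proper_fun h -> is_prox gam h P -> h x \is a fin_num ->
  Phir lam (P (x - gam *: v)) + (gam^-1 - D) * sqnorm (P (x - gam *: v) - x)
  <= Phir lam x - dotv (v - smooth_grad lam x) (P (x - gam *: v) - x).
Proof.
move=> lam0 LD gam0 hconv hprop hP hx.
have := smooth_descent x (P (x - gam *: v)) lam0 LD.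
have := prox_step_descent gam0 hprop hconv hP v hx.
rewrite /Phir dotvBl; lra.
Qed.

Lemma one_step_bound lam D gam beta c P x xt v :
  0 < lam -> 0 < D -> L + (2 * lam)^-1 <= D -> gam = (6 * D)^-1 ->
  0 < beta -> 0 <= c -> c * (1 + beta) <= 2 * D ->
  convex_fun h -> proper_fun h -> is_prox gam h P -> h x \is a fin_num ->
  Phir lam (P (x - gam *: v)) + c * sqnorm (P (x - gam *: v) - xt)
    + D * sqnorm (P (x - gam *: smooth_grad lam x) - x)
  <= Phir lam x + c * (1 + beta^-1) * sqnorm (x - xt)
     + 11 / 36 * D^-1 * sqnorm (v - smooth_grad lam x).
Proof.
move=> lam0 D0 LD gamE beta0 c0 cD hconv hprop hP hx.
have gam0 : 0 < gam by rewrite gamE invr_gt0 mulr_gt0.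
set p := P (x - gam *: v); set pb := P _; set u := p - x; set dl := v - smooth_grad lam x.
have descent := Phir_prox_step v lam0 LD gam0 hconv hprop hP hx.
rewrite -/p -/u -/dl gamE invrK in descent.
have cross : - (2 * dotv dl u) <= 2 * D * sqnorm u + (2 * D)^-1 * sqnorm dl.
  by rewrite -mulrN dotvC -dotvNr -(sqnormN dl) dotv_young // mulr_gt0.
have anchor : c * sqnorm (p - xt)
    <= c * (1 + beta) * sqnorm u + c * (1 + beta^-1) * sqnorm (x - xt).
  have -> : p - xt = u + (x - xt) by rewrite addrA subrK.
  rewrite sqnormD -!mulrA -mulrDr ler_wpM2l //.
  by have := dotv_young u (x - xt) beta0; lra.
have anchor_u : c * (1 + beta) * sqnorm u <= 2 * D * sqnorm u.
  by rewrite ler_wpM2r ?sqnorm_ge0.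
have gap : sqnorm (pb - x) <= 2 * sqnorm u + 2 * gam ^+ 2 * sqnorm dl.
  have -> : pb - x = u - (p - pb) by rewrite opprB [RHS]addrC addrA subrK.
  have := dotv_young1 u (- (p - pb)); rewrite dotvNr sqnormN.
  have := prox_nonexpansive gam0 hprop hconv hP (x - gam *: v) (x - gam *: smooth_grad lam x).
  have -> : x - gam *: v - (x - gam *: smooth_grad lam x) = - (gam *: dl).
    by rewrite /dl; apply/rowP => i; rewrite !mxE; lra.
  rewrite sqnormN sqnormZ (sqnormB u); lra.
have gam2 : D * (2 * gam ^+ 2) = 18^-1 * D^-1.
  by rewrite gamE; field; rewrite gt_eqF.
have := ler_wpM2l (ltW D0) gap; rewrite mulrDr [D * (_ * sqnorm dl)]mulrA gam2.
rewrite invfM in cross; lra.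
Qed.

End OneStep.

Section Resample.
Context {R : realType} (O B : finType) (upd : O -> B -> O) (proj : O -> B).
Hypotheses (proj_upd : forall o x, proj (upd o x) = x)
  (upd_upd_proj : forall o x, upd (upd o x) (proj o) = o).

(* [o |-> (upd o x, proj o)] is an involution of [O * B]: summing over a
   resampled coordinate is summing over all outcomes. *)
Lemma sum_resample (F : O -> R) :
  #|B|%:R * \sum_o F o = \sum_o \sum_x F (upd o x).
Proof.
have -> : #|B|%:R * \sum_o F o = \sum_o \sum_(x : B) F o.
  by rewrite mulr_sumr; apply: eq_bigr => o _; rewrite sumr_const mulr_natl.
rewrite !pair_bigA /=.
pose swap (p : O * B) := (upd p.1 p.2, proj p.1).
have swapK : involutive swap by case=> o x; rewrite /swap /= upd_upd_proj proj_upd.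
by rewrite (reindex_inj (inv_inj swapK)).
Qed.

Lemma sum_resample_indep (A : Type) (X : O -> A) (F : A -> B -> R) :
  (forall o x, X (upd o x) = X o) ->
  #|B|%:R * \sum_o F (X o) (proj o) = \sum_o \sum_x F (X o) x.
Proof.
move=> X_upd; rewrite sum_resample.
by apply: eq_bigr => o _; apply: eq_bigr => x _; rewrite X_upd proj_upd.
Qed.

End Resample.

Section MinibatchVariance.
Context {R : realType} {d : nat}.
Local Notation vec := 'rV[R]_d.
Variables (n b : nat).
Hypothesis n_gt0 : (0 < n)%N.
Local Notation T := (b.-tuple 'I_n).

Definition tuple_set (i : 'I_b) (t : T) (x : 'I_n) : T :=
  [tuple (if j == i then x else tnth t j) | j < b].

Lemma tnth_tuple_set i t x : tnth (tuple_set i t x) i = x.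
Proof. by rewrite tnth_mktuple eqxx. Qed.

Lemma tnth_tuple_set_neq i k t x : k != i -> tnth (tuple_set i t x) k = tnth t k.
Proof. by move=> /negbTE ki; rewrite tnth_mktuple ki. Qed.

Lemma tuple_set_tnth i t x : tuple_set i (tuple_set i t x) (tnth t i) = t.
Proof.
apply: eq_from_tnth => j; rewrite tnth_mktuple.
by case: eqP => [-> //|/eqP ji]; rewrite tnth_tuple_set_neq.
Qed.

Lemma sum_tuple_tnth (i : 'I_b) (F : 'I_n -> R) :
  \sum_(t : T) F (tnth t i) = #|{: T}|%:R * n%:R^-1 * \sum_j F j.
Proof.
have n0 : n%:R != 0 :> R by rewrite pnatr_eq0 -lt0n.
have := sum_resample_indep (tnth_tuple_set i) (tuple_set_tnth i) (X := fun=> tt)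
  (fun _ x => F x) (fun _ _ => erefl).
rewrite card_ord sumr_const -[(\sum_x F x) *+ _]mulr_natl => resampled.
by apply: (mulfI n0); rewrite resampled; field.
Qed.

Lemma sum_tuple_dotv_centered (Y : 'I_n -> vec) (i k : 'I_b) :
  \sum_j Y j = 0 -> k != i ->
  \sum_(t : T) dotv (Y (tnth t i)) (Y (tnth t k)) = 0.
Proof.
move=> Y0 ki; have n0 : n%:R != 0 :> R by rewrite pnatr_eq0 -lt0n.
have := sum_resample_indep (tnth_tuple_set i) (tuple_set_tnth i)
  (X := fun t => tnth t k) (fun a x => dotv (Y x) (Y a)).
rewrite card_ord => /(_ (fun t x => tnth_tuple_set_neq t x ki)) resampled.
apply: (mulfI n0); rewrite mulr0 resampled.
by apply: big1 => t _; rewrite -dotv_suml Y0 dotv0l.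
Qed.

Lemma sqnorm_sum_centered (Z : 'I_n -> vec) :
  let Zm := n%:R^-1 *: \sum_j Z j in
  \sum_j sqnorm (Z j - Zm) = \sum_j sqnorm (Z j) - n%:R * sqnorm Zm.
Proof.
move=> Zm; have n0 : n%:R != 0 :> R by rewrite pnatr_eq0 -lt0n.
have sumZ : \sum_j Z j = n%:R *: Zm by rewrite scalerA mulfV // scale1r.
under eq_bigr do rewrite sqnormB.
rewrite !big_split /= sumrN -mulr_sumr -dotv_suml sumZ dotvZl sumr_const card_ord.
rewrite /sqnorm -mulr_natl; lra.
Qed.

Lemma minibatch_variance (Z : 'I_n -> vec) : (0 < b)%N ->
  \sum_(t : T) sqnorm (b%:R^-1 *: \sum_(j <- t) Z j - n%:R^-1 *: \sum_j Z j)
  <= #|{: T}|%:R * b%:R^-1 * (n%:R^-1 * \sum_j sqnorm (Z j)).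
Proof.
move=> b_gt0; have b0 : b%:R != 0 :> R by rewrite pnatr_eq0 -lt0n.
set Zm := n%:R^-1 *: _; pose Y j := Z j - Zm.
have Y0 : \sum_j Y j = 0.
  by rewrite sumrB sumr_const card_ord -scaler_nat scalerA mulfV ?scale1r ?subrr //
    pnatr_eq0 -lt0n.
have -> : \sum_(t : T) sqnorm (b%:R^-1 *: \sum_(j <- t) Z j - Zm)
    = b%:R^-1 ^+ 2 * \sum_(t : T) \sum_(i < b) \sum_(k < b) dotv (Y (tnth t i)) (Y (tnth t k)).
  rewrite mulr_sumr; apply: eq_bigr => t _.
  have -> : b%:R^-1 *: \sum_(j <- t) Z j - Zm = b%:R^-1 *: \sum_(i < b) Y (tnth t i).
    rewrite big_tuple sumrB sumr_const card_ord scalerBr -[Zm *+ b]scaler_nat scalerA.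
    by rewrite mulVf // scale1r.
  by rewrite sqnormZ /sqnorm dotv_suml; congr (_ * _); apply: eq_bigr => i _; rewrite dotv_sumr.
have diag i : \sum_(t : T) \sum_(k < b) dotv (Y (tnth t i)) (Y (tnth t k))
    = #|{: T}|%:R * n%:R^-1 * \sum_j sqnorm (Y j).
  rewrite exchange_big (bigD1 i) //= (sum_tuple_tnth i (fun j => sqnorm (Y j))).
  by rewrite [X in _ + X]big1 ?addr0 // => k ki; exact: sum_tuple_dotv_centered.
rewrite exchange_big (eq_bigr _ (fun i _ => diag i)) sumr_const card_ord sqnorm_sum_centered -/Zm.
have -> : b%:R^-1 ^+ 2 * (#|{: T}|%:R * n%:R^-1 * (\sum_j sqnorm (Z j) - n%:R * sqnorm Zm) *+ b)
    = #|{: T}|%:R * b%:R^-1 * (n%:R^-1 * (\sum_j sqnorm (Z j) - n%:R * sqnorm Zm)).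
  by rewrite -[(_ * _) *+ b]mulr_natl expr2; field; rewrite b0 andbT pnatr_eq0 -lt0n.
rewrite ler_wpM2l ?mulr_ge0 ?invr_ge0 ?ler0n // ler_wpM2l ?invr_ge0 ?ler0n //.
by rewrite lerBlDr lerDl mulr_ge0 ?ler0n ?sqnorm_ge0.
Qed.

End MinibatchVariance.

Section Estimator.
Context {R : realType} {d : nat}.
Local Notation vec := 'rV[R]_d.
Variables (n : nat) (gfj : 'I_n -> vec -> vec) (L : R) (zeta : R -> vec -> vec).
Variables (lam : R) (b : nat).
Hypotheses (n_gt0 : (0 < n)%N) (gfj_lip : forall j, lipschitz_e (gfj j) L)
  (b_gt0 : (0 < b)%N).

Definition vr_grad (I : seq 'I_n) (anchor w : vec) : vec :=
  b%:R^-1 *: \sum_(j <- I) (gfj j w - gfj j anchor) + gavg gfj anchor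
  + lam^-1 *: (w - zeta lam w).

Lemma vr_grad_variance x a :
  \sum_(t : b.-tuple 'I_n) sqnorm (vr_grad t a x - smooth_grad gfj zeta lam x)
  <= #|{: b.-tuple 'I_n}|%:R * b%:R^-1 * (L ^+ 2 * sqnorm (x - a)).
Proof.
have errE t : vr_grad t a x - smooth_grad gfj zeta lam x
    = b%:R^-1 *: \sum_(j <- t) (gfj j x - gfj j a)
      - n%:R^-1 *: \sum_(j < n) (gfj j x - gfj j a).
  rewrite /vr_grad /smooth_grad /gavg [\sum_(j < n) (_ - _)]sumrB.
  move: (\sum_(j <- t) _) (\sum_(j < n) gfj j x) (\sum_(j < n) gfj j a) => A B C.
  by apply/rowP => i; rewrite !mxE; lra.
under eq_bigr do rewrite errE.
apply: (le_trans (minibatch_variance n_gt0 _ b_gt0)).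
rewrite ler_wpM2l ?mulr_ge0 ?invr_ge0 ?ler0n // -[_ * sqnorm _](mean_cst n_gt0).
rewrite ler_wpM2l ?invr_ge0 ?ler0n //; apply: ler_sum => j _.
have lip := gfj_lip j x a.
by rewrite -!sqr_enorm -exprMn lerXn2r ?nnegrE ?enorm_ge0 // (le_trans _ lip) ?enorm_ge0.
Qed.

End Estimator.

Section Iterates.
Context {R : realType} {d : nat}.
Local Notation vec := 'rV[R]_d.
Variables (n : nat) (gfj : 'I_n -> vec -> vec) (zeta : R -> vec -> vec).
Variables (lam gam : R) (P : vec -> vec) (S m b : nat) (w1 : vec).

Lemma inner_iter_ext (dr dr' : nat -> seq 'I_n) a t :
  (forall t', (t' < t)%N -> dr t' = dr' t') ->
  inner_iter gfj zeta lam gam P b dr a t = inner_iter gfj zeta lam gam P b dr' a t.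
Proof.
elim: t => [//|t IH] eq_dr /=.
by rewrite eq_dr // IH // => t' lt_t't; apply: eq_dr; exact: ltnW.
Qed.

Lemma anchor_iter_ext (dr dr' : nat -> nat -> seq 'I_n) k :
  (forall k' t', (k' < k)%N -> (t' < m)%N -> dr k' t' = dr' k' t') ->
  anchor_iter gfj zeta lam gam P b m dr w1 k = anchor_iter gfj zeta lam gam P b m dr' w1 k.
Proof.
elim: k => [//|k IH] eq_dr /=.
rewrite IH => [|k' t' lt_k'k lt_t'm]; last by apply: eq_dr => //; exact: ltnW.
by apply: inner_iter_ext => t' lt_t'm; apply: eq_dr.
Qed.

Definition sample_set (kt : 'I_S * 'I_m) (om : sample_space n S m b) (x : b.-tuple 'I_n)
  : sample_space n S m b := [ffun p => if p == kt then x else om p].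

Lemma sample_set_at kt om x : sample_set kt om x kt = x.
Proof. by rewrite ffunE eqxx. Qed.

Lemma sample_set_id kt om x : sample_set kt (sample_set kt om x) (om kt) = om.
Proof. by apply/ffunP => p; rewrite !ffunE; case: eqP => [->|]. Qed.

Lemma draws_sample_set (kt : 'I_S * 'I_m) om x k t :
  (k, t) != (val kt.1, val kt.2) -> draws (sample_set kt om x) k t = draws om k t.
Proof.
move=> ne_kt; rewrite /draws.
case: insubP => [k' _ k'E|//]; case: insubP => [t' _ t'E|//].
rewrite ffunE; case: eqP => // kt'E.
by move: ne_kt; rewrite -kt'E /= k'E t'E eqxx.
Qed.

Local Notation X om k t := (vrspa_iter gfj zeta lam gam P w1 (om : sample_space n S m b) k t).

Lemma vrspa_iterS om (k : 'I_S) (t : 'I_m) :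
  X om k t.+1 = P (X om k t - gam *: vr_grad gfj zeta lam b (om (k, t)) (X om k 0) (X om k t)).
Proof. by rewrite /vrspa_iter /= /draws !valK. Qed.

Lemma vrspa_iter_sample_set (kt : 'I_S * 'I_m) om x t : (t <= kt.2)%N ->
  X (sample_set kt om x) kt.1 t = X om kt.1 t.
Proof.
move=> le_t; rewrite /vrspa_iter (anchor_iter_ext (dr' := draws om)); last first.
  move=> k' t' lt_k' _; apply: draws_sample_set.
  by apply/negP => /eqP [k'E _]; move: lt_k'; rewrite k'E ltnn.
apply: inner_iter_ext => t' lt_t'; apply: draws_sample_set.
by apply/negP => /eqP [t'E]; move: lt_t'; rewrite t'E ltnNge le_t.
Qed.

End Iterates.

Section LyapunovCoef.
Context {R : realType}.
Variables (L D : R) (m : nat).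
Hypotheses (L_ge0 : 0 <= L) (L_le_D : L <= D) (D_gt0 : 0 < D) (m_gt0 : (0 < m)%N).

(* The one-step bound weighs the gradient-estimation error by [11 / 36 / D], and
   for batch size [m ^+ 2] that error has variance [L ^+ 2 / m ^+ 2] per unit
   of [|w_t - anchor|^2]. *)
Definition drift : R := 11 / 36 * D^-1 * L ^+ 2 / m%:R ^+ 2.

(* The weight of [|w_t - anchor|^2] in the Lyapunov function at inner step [t];
   it vanishes at [t = m], where the anchor is reset. *)
Definition lyap_coef (t : nat) : R := 2 * drift * (m%:R - t%:R).

Lemma drift_ge0 : 0 <= drift.
Proof. by rewrite /drift !mulr_ge0 ?invr_ge0 ?sqr_ge0 // ltW. Qed.

Lemma lyap_coef_ge0 t : (t <= m)%N -> 0 <= lyap_coef t.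
Proof.
move=> le_tm; apply: mulr_ge0; last by rewrite subr_ge0 ler_nat.
by rewrite mulr_ge0 // drift_ge0.
Qed.

Lemma lyap_coefS t : (t < m)%N ->
  lyap_coef t.+1 * (1 + (2 * m%:R)^-1) + drift <= lyap_coef t.
Proof.
move=> lt_tm; have m0 : 0 < m%:R :> R by rewrite ltr0n.
have : (m%:R - t.+1%:R) / m%:R <= 1 :> R.
  by rewrite ler_pdivrMr // mul1r lerBlDr lerDl ler0n.
move=> /(ler_wpM2l drift_ge0); rewrite /lyap_coef -natr1 invfM mulr1; lra.
Qed.

Lemma lyap_coef_le t : (t < m)%N -> lyap_coef t.+1 * (1 + 2 * m%:R) <= 2 * D.
Proof.
move=> lt_tm; have m1 : 1 <= m%:R :> R by rewrite ler1n.
have le_tm : t.+1%:R <= m%:R :> R by rewrite ler_nat.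
have quad : (m%:R - t.+1%:R) * (1 + 2 * m%:R) <= 3 * m%:R ^+ 2 :> R.
  have m0 : 0 <= m%:R :> R by rewrite ler0n.
  have : (m%:R - t.+1%:R) * (1 + 2 * m%:R) <= m%:R * (1 + 2 * m%:R) :> R.
    by rewrite ler_wpM2r ?addr_ge0 ?mulr_ge0 // lerBlDr lerDl ler0n.
  have : 0 <= m%:R * (m%:R - 1) :> R by rewrite mulr_ge0 // subr_ge0.
  rewrite expr2; lra.
have sqrL : L ^+ 2 <= D ^+ 2 by rewrite lerXn2r ?nnegrE // ltW.

have LD : L ^+ 2 / D <= D by rewrite ler_pdivrMr // -expr2.
have driftE : drift * m%:R ^+ 2 = 11 / 36 * (L ^+ 2 / D).
  by rewrite /drift; field; rewrite gt_eqF // pnatr_eq0 -lt0n.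
have drift2 : 0 <= 2 * drift by rewrite mulr_ge0 // drift_ge0.
rewrite /lyap_coef -mulrA (le_trans (ler_wpM2l drift2 quad)) //.
have -> : 2 * drift * (3 * m%:R ^+ 2) = 6 * (drift * m%:R ^+ 2) by ring.
have D0 := D_gt0; rewrite driftE; lra.
Qed.

End LyapunovCoef.

Section Descent.
Context {R : realType} {d : nat}.
Local Notation vec := 'rV[R]_d.
Variables (n : nat) (fj : 'I_n -> vec -> R) (gfj : 'I_n -> vec -> vec) (L : R).
Variables (g : vec -> R) (zeta : R -> vec -> vec) (h : vec -> \bar R).
Variables (lam gam D : R) (P : vec -> vec) (S m : nat) (w1 : vec).
Hypotheses (n_gt0 : (0 < n)%N) (fj_smooth : forall j, L_smooth (fj j) (gfj j) L)
  (zeta_moreau : is_moreau_selection g zeta)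
  (h_convex : convex_fun h) (h_proper : proper_fun h)
  (lam_gt0 : 0 < lam) (L_ge0 : 0 <= L) (D_ge : L + lam^-1 <= D)
  (gamE : gam = (6 * D)^-1) (hP : is_prox gam h P) (m_gt0 : (0 < m)%N)
  (h_w1 : h w1 \is a fin_num).

Local Notation b := (m ^ 2)%N.
Local Notation Omega := (sample_space n S m b).
Local Notation X om k t := (vrspa_iter gfj zeta lam gam P w1 (om : Omega) k t).
Local Notation Phi := (Phir fj g zeta h lam).
Local Notation grad := (smooth_grad gfj zeta lam).
Local Notation sqgrad om k t := (sqnorm (grad_map gfj zeta lam gam P (X om k t))).

Lemma D_gt0 : 0 < D.
Proof. by apply: lt_le_trans D_ge; rewrite ltr_pwDr ?invr_gt0. Qed.

Lemma L_le_D : L <= D.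
Proof. by apply: le_trans D_ge; rewrite lerDl invr_ge0 ltW. Qed.

Lemma sqnorm_grad_map x :
  D * sqnorm (P (x - gam *: grad x) - x) = (36 * D)^-1 * sqnorm (grad_map gfj zeta lam gam P x).
Proof.
have D0 := D_gt0.
rewrite /grad_map sqnormZ -sqnormN opprB mulrA gamE invrK; congr (_ * _).
by field; rewrite gt_eqF.
Qed.

Lemma vrspa_iter_fin_num om k t : h (X om k t) \is a fin_num.
Proof.
have inner_fin (dr : nat -> seq 'I_n) a t' : h a \is a fin_num ->
    h (inner_iter gfj zeta lam gam P b dr a t') \is a fin_num.
  by case: t' => [//|t'] _; exact: (prox_fin_num h_proper hP).
by apply: (inner_fin); elim: k => [//|k IH] /=; exact: inner_fin.
Qed.

Lemma sum_estimator_error (k : 'I_S) (t : 'I_m) :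
  \sum_(om : Omega)
     sqnorm (vr_grad gfj zeta lam b (om (k, t)) (X om k 0) (X om k t) - grad (X om k t))
  <= \sum_(om : Omega) b%:R^-1 * (L ^+ 2 * sqnorm (X om k t - X om k 0)).
Proof.
pose Y om := (X om k t, X om k 0).
(* This is where the independence of the draws enters. *)
have Y_set om x : Y (sample_set (k, t) om x) = Y om.
  by rewrite /Y !vrspa_iter_sample_set.
have := sum_resample_indep (sample_set_at (k, t)) (sample_set_id (k, t)) (X := Y)
  (fun p (I : b.-tuple 'I_n) => sqnorm (vr_grad gfj zeta lam b I p.2 p.1 - grad p.1)) Y_set.
have T0 : 0 < #|{: b.-tuple 'I_n}|%:R :> R.
  by rewrite ltr0n card_tuple card_ord expn_gt0 n_gt0.
move=> /= resampled; rewrite -(ler_pM2l T0) resampled mulr_sumr.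
apply: ler_sum => om _; rewrite mulrA.
apply: vr_grad_variance => //; first by move=> j; case: (fj_smooth j).
by rewrite expn_gt0 m_gt0.
Qed.

(* [N] times the expected Lyapunov function, [N] the size of the sample space:
   expectations are kept as unnormalised sums over [Omega]. *)
Definition lyap k t : R := \sum_(om : Omega)
  (Phi (X om k t) + lyap_coef L D m t * sqnorm (X om k t - X om k 0)).

Lemma lyap_step (k : 'I_S) (t : 'I_m) :
  lyap k t.+1 + (36 * D)^-1 * \sum_(om : Omega) sqgrad om k t <= lyap k t.
Proof.
have D0 := D_gt0; have L_D := L_le_D.
have c_ge0 : 0 <= lyap_coef L D m t.+1 by apply: lyap_coef_ge0.
have c_le : lyap_coef L D m t.+1 * (1 + 2 * m%:R) <= 2 * D by apply: lyap_coef_le.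
have c_dec : lyap_coef L D m t.+1 * (1 + (2 * m%:R)^-1) + drift L D m <= lyap_coef L D m t.
  by apply: lyap_coefS.
have step om : Phi (X om k t.+1) + lyap_coef L D m t.+1 * sqnorm (X om k t.+1 - X om k 0)
      + (36 * D)^-1 * sqgrad om k t
    <= Phi (X om k t) + lyap_coef L D m t.+1 * (1 + (2 * m%:R)^-1) * sqnorm (X om k t - X om k 0)
      + 11 / 36 * D^-1
        * sqnorm (vr_grad gfj zeta lam b (om (k, t)) (X om k 0) (X om k t) - grad (X om k t)).
  rewrite vrspa_iterS -sqnorm_grad_map.
  apply: one_step_bound => //.
  - have := D_ge; have : 0 < lam^-1 by rewrite invr_gt0.
    by rewrite invfM; lra.
  - by rewrite mulr_gt0 // ltr0n.
  - exact: vrspa_iter_fin_num.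
have noise : 11 / 36 * D^-1 * \sum_(om : Omega)
      sqnorm (vr_grad gfj zeta lam b (om (k, t)) (X om k 0) (X om k t) - grad (X om k t))
    <= \sum_(om : Omega) drift L D m * sqnorm (X om k t - X om k 0).
  apply: le_trans (ler_wpM2l _ (sum_estimator_error k t)) _.
    by rewrite mulr_ge0 ?invr_ge0 // ltW.
  rewrite mulr_sumr; apply: ler_sum => om _; rewrite /drift natrX; lra.
rewrite /lyap mulr_sumr -big_split /=.
apply: (le_trans (ler_sum _ (fun om _ => step om))).
rewrite big_split /= -mulr_sumr; apply: (le_trans (lerD (lexx _) noise)).
rewrite -big_split /=; apply: ler_sum => om _.
have := ler_wpM2r (sqnorm_ge0 (X om k t - X om k 0)) c_dec; lra.
Qed.

Lemma lyap_epoch (k : 'I_S) t : (t <= m)%N ->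
  lyap k t + (36 * D)^-1 * \sum_(t' < t) \sum_(om : Omega) sqgrad om k t' <= lyap k 0.
Proof.
elim: t => [_|t IH lt_tm]; first by rewrite big_ord0 mulr0 addr0.
rewrite big_ord_recr /= mulrDr addrA.
have := lyap_step k (Ordinal lt_tm); have := IH (ltnW lt_tm); lra.
Qed.

Lemma lyap_next_epoch k : lyap k m = lyap k.+1 0.
Proof.
apply: eq_bigr => om _.
by rewrite /lyap_coef !subrr sqnorm0 !mulr0 mul0r !addr0.
Qed.

Lemma lyap_total k : (k <= S)%N ->
  lyap k 0 + (36 * D)^-1 * \sum_(k' < k) \sum_(t < m) \sum_(om : Omega) sqgrad om k' t
  <= lyap 0 0.
Proof.
elim: k => [_|k IH lt_kS]; first by rewrite big_ord0 mulr0 addr0.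
rewrite big_ord_recr /= mulrDr addrA -lyap_next_epoch.
have := lyap_epoch (Ordinal lt_kS) (leqnn m); have := IH (ltnW lt_kS); lra.
Qed.

Lemma vrspa_expected_sqgrad_le (Phistar : R) : (0 < S)%N ->
  (forall x, h x \is a fin_num -> Phistar <= Phi x) ->
  vrspa_expected_sqgrad gfj zeta lam gam P S m b w1
  <= 36 * (Phi w1 - Phistar) * (D / (S * m)%:R).
Proof.
move=> S_gt0 Phistar_le; have D0 := D_gt0.
set N : R := #|{: Omega}|%:R.
pose G := \sum_(k < S) \sum_(t < m) \sum_(om : Omega) sqgrad om k t.
have N0 : 0 < N by rewrite ltr0n card_ffun card_tuple card_ord !expn_gt0 n_gt0.
have SM0 : 0 < (S * m)%:R :> R by rewrite ltr0n muln_gt0 S_gt0 m_gt0.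
have lyap_start : lyap 0 0 = N * Phi w1.
  have X00 om : X om 0 0 = w1 by [].
  rewrite /lyap; under eq_bigr do rewrite X00 subrr sqnorm0 mulr0 addr0.
  by rewrite sumr_const mulr_natl.
have lyap_end : N * Phistar <= lyap S 0.
  rewrite /N mulr_natl -sumr_const; apply: ler_sum => om _.
  by rewrite subrr sqnorm0 mulr0 addr0 Phistar_le ?vrspa_iter_fin_num.
have G_le : G <= 36 * D * (N * (Phi w1 - Phistar)).
  rewrite -ler_pdivrMl ?mulr_gt0 //.
  by have := lyap_total (leqnn S); rewrite -/G lyap_start; lra.
have -> : vrspa_expected_sqgrad gfj zeta lam gam P S m b w1 = N^-1 * ((S * m)%:R^-1 * G).
  rewrite /vrspa_expected_sqgrad -mulr_sumr /G exchange_big /=.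
  by congr (_ * (_ * _)); apply: eq_bigr => k _; rewrite exchange_big.
rewrite -ler_pdivlMl ?invr_gt0 // invrK -ler_pdivlMl ?invr_gt0 // invrK.
apply: (le_trans G_le); rewrite le_eqVlt; apply/orP; left; apply/eqP.
by field; rewrite !pnatr_eq0 -!lt0n m_gt0 S_gt0.
Qed.

End Descent.

Section ExtendedObjective.
Context {R : realType} {d : nat}.
Local Notation vec := 'rV[R]_d.
Variables (n : nat) (fj : 'I_n -> vec -> R) (g : vec -> R) (zeta : R -> vec -> vec).
Variables (h : vec -> \bar R) (lam : R).

Lemma PhiTE x : h x \is a fin_num -> PhiT fj g zeta h lam x = (Phir fj g zeta h lam x)%:E.
Proof. by move=> hx; rewrite /PhiT /Phir -(fineK hx) -EFinD. Qed.

Lemma PhiT_pinfty x : proper_fun h -> h x \isn't a fin_num ->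
  PhiT fj g zeta h lam x = +oo%E.
Proof.
move=> [hN _]; rewrite fin_numE negb_and !negbK => /orP [/eqP hx|/eqP hx].
  by have := hN x.
by rewrite /PhiT hx.
Qed.

Lemma PhiT_argmin_fin_num wstar : proper_fun h ->
  (forall w, (PhiT fj g zeta h lam wstar <= PhiT fj g zeta h lam w)%E) ->
  h wstar \is a fin_num.
Proof.
move=> h_proper wstar_min; apply: contraT => h_star.
have [_ [w hw]] := h_proper; have := wstar_min w.
rewrite PhiT_pinfty // leye_eq /PhiT.
by case: (h w) hw (h_proper.1 w).
Qed.

End ExtendedObjective.

Lemma vrspa_expected_sqgrad_trivial {R : realType} {d n : nat}
    (gfj : 'I_n -> 'rV[R]_d -> 'rV[R]_d) zeta lam gam P S m b w1 :
  (forall v : 'rV[R]_d, v = 0) -> vrspa_expected_sqgrad gfj zeta lam gam P S m b w1 = 0.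
Proof.
move=> vec0; rewrite /vrspa_expected_sqgrad big1 ?mulr0 // => om _.
by rewrite big1 ?mulr0 // => k _; rewrite big1 // => t _; rewrite (vec0 (grad_map _ _ _ _ _ _)) sqnorm0.
Qed.

Theorem lemma7 (R : realType) (d n : nat)
  (fj : 'I_n -> 'rV[R]_d -> R) (gfj : 'I_n -> 'rV[R]_d -> 'rV[R]_d) (L : R)
  (g : 'rV[R]_d -> R) (zeta : R -> 'rV[R]_d -> 'rV[R]_d)
  (h : 'rV[R]_d -> \bar R)
  (S m : nat) (theta : R) (w1 wstar : 'rV[R]_d) (P : 'rV[R]_d -> 'rV[R]_d) :
  (0 < n)%N ->
  (forall j, L_smooth (fj j) (gfj j) L) ->
  is_moreau_selection g zeta ->
  proper_fun h -> closed_fun h -> convex_fun h ->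
  (0 < S)%N -> (0 < m)%N ->
  let lam := (S * m)%:R `^ (- theta) in
  let gam := (6 * (L + (S * m)%:R `^ theta))^-1 in
  (forall w, (PhiT fj g zeta h lam wstar <= PhiT fj g zeta h lam w)%E) ->
  is_prox gam h P ->
  ((vrspa_expected_sqgrad gfj zeta lam gam P S m (m ^ 2) w1)%:E
   <= 36%:E * (PhiT fj g zeta h lam w1 - PhiT fj g zeta h lam wstar)
        * ((L + (S * m)%:R `^ theta) / (S * m)%:R)%:E)%E.
Proof.
move=> n_gt0 fj_smooth zeta_moreau h_proper _ h_convex S_gt0 m_gt0 lam gam wstar_min hP.
have SM0 : 0 < (S * m)%:R :> R by rewrite ltr0n muln_gt0 S_gt0 m_gt0.
have lam0 : 0 < lam by rewrite powR_gt0.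
have lamV : lam^-1 = (S * m)%:R `^ theta by rewrite /lam powRN invrK.
have h_star := PhiT_argmin_fin_num h_proper wstar_min.
have [L_ge0|L_lt0] := leP 0 L; last first.
  have vec0 := lipschitz_e_lt0_eq0 (fj_smooth (Ordinal n_gt0)).2 L_lt0.
  rewrite vrspa_expected_sqgrad_trivial // (vec0 w1) -(vec0 wstar) PhiTE //.
  by rewrite -EFinB subrr mule0 mul0e.
have D0 : 0 < L + (S * m)%:R `^ theta by rewrite -lamV ltr_wpDl // invr_gt0.
have [h_w1|h_w1] := boolP (h w1 \is a fin_num); last first.
  rewrite PhiT_pinfty // PhiTE // mulry gtr0_sg // mul1e mulyr gtr0_sg ?divr_gt0 //.
  by rewrite mul1e leey.
rewrite !PhiTE // -EFinB -!EFinM lee_fin.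
apply: vrspa_expected_sqgrad_le => //; rewrite ?lamV //.
by move=> x hx; have := wstar_min x; rewrite !PhiTE.
Qed.
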